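(* Let $f_0, g_0 \in \mathbb{C}[z]$ be polynomials of equal length having nonzero constant coefficients. Let $\sigma_0,\sigma_1,\ldots$ be a sequence of values from $\{-1,1\}$, and define $f_n,g_n$ recursively for all $n \in \mathbb{N}$ by \[ f_{n+1}(z) = f_n(z)+\sigma_n z^{\operatorname{len} f_n} f_n^\dagger(-z), \qquad g_{n+1}(z) = g_n(z)+\sigma_n z^{\operatorname{len} g_n} g_n^\dagger(-z). \] Then for every $n\ge 0$, \begin{multline*} \frac{\|f_n g_n\|_2^2}{\|f_n\|_2^2\|g_n\|_2^2} = \frac{2 \|f_0 g_0\|_2^2+\|f_0 \widetilde{g}_0\|_2^2 + \operatorname{Re} \int f_0 \widetilde{f}_0 \overline{g_0 \widetilde{g}_0}}{3 \|f_0\|_2^2 \|g_0\|_2^2} \\ +\left(-\frac{1}{2}\right)^n \frac{\|f_0 g_0\|_2^2 -\|f_0 \widetilde{g}_0\|_2^2 - \operatorname{Re} \int f_0 \widetilde{f}_0 \overline{g_0 \widetilde{g}_0}}{3 \|f_0\|_2^2 \|g_0\|_2^2}. \end{multline*}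
   Context: For a polynomial $a(z)=a_0+\cdots+a_dz^d$ of degree $d$, $\operatorname{len} a=1+\deg a$ and $a^\dagger(z)=\overline{a_d}+\overline{a_{d-1}}z+\cdots+\overline{a_0}z^d$ (conjugate reciprocal); $f_n^\dagger(-z)$ means $f_n^\dagger$ evaluated at $-z$. For a Laurent polynomial $a(z)=\sum_j a_jz^j$: $\widetilde{a}(z)=a(-z)$, $\overline{a(z)}=\sum_j\overline{a_j}z^{-j}$, $\int a$ is the constant coefficient $a_0=\frac{1}{2\pi}\int_0^{2\pi}a(e^{i\theta})d\theta$, and $\|a\|_p=\left(\frac{1}{2\pi}\int_0^{2\pi}|a(e^{i\theta})|^pd\theta\right)^{1/p}$. *)

(* Complex numbers: an arbitrary numClosedFieldType C
   (e.g. the complex numbers), with conjugation  z^*  and real part  'Re z. *)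
From mathcomp Require Import all_boot all_order all_algebra.
Set Implicit Arguments. Unset Strict Implicit. Unset Printing Implicit Defensive.
Import Order.TTheory GRing.Theory Num.Theory.
Local Open Scope ring_scope.

Section Defs.
Variable C : numClosedFieldType.

(* len a = 1 + deg a  (mathcomp's size of a polynomial) *)
Definition plen (a : {poly C}) : nat := size a.

Definition pdagger (a : {poly C}) : {poly C} :=
  \poly_(i < size a) (a`_(size a - 1 - i))^*.

Definition ptilde (a : {poly C}) : {poly C} := a \Po (- 'X).

(* For polynomials p, q:  int ( p * conj(q) )  = constant coefficient of the
   Laurent polynomial p(z) * sum_j conj(q_j) z^{-j}, i.e. sum_j p_j conj(q_j). *)
Definition int_mul_conj (p q : {poly C}) : C :=
  \sum_(j < maxn (size p) (size q)) p`_j * (q`_j)^*.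

Definition norm2sq (a : {poly C}) : C := int_mul_conj a a.

Definition step (s : C) (f : {poly C}) : {poly C} :=
  f + s *: ('X^(plen f) * ((pdagger f) \Po (- 'X))).

Fixpoint iter_seq (sigma : nat -> C) (f0 : {poly C}) (n : nat) : {poly C} :=
  match n with
  | 0 => f0
  | n'.+1 => step (sigma n') (iter_seq sigma f0 n')
  end.

End Defs.

(* On the unit circle z^{len f} f^dagger(-z) is a unimodular multiple u(z) of
   conj(f(-z)), with u(-z) = -u(z); hence the values of f_{n+1} at z and -z are
   (a + u conj c, c - u conj a) for a = f_n(z), c = f_n(-z).  Averaging over the
   4 len f_n-th roots of unity computes every integral exactly (discrete Parseval),
   and pairing z with -z turns the step into pointwise algebraic identities.  They
   give ||f_{n+1}||^2 = 2 ||f_n||^2 and, for A = ||f g||^2 and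
   S = ||f g~||^2 + Re int f f~ conj(g g~), the linear recurrence A' = 2 (A + S),
   S' = 4 A: the only other term is the coefficient of z^{4k+2} in f g f~ g~,
   where len f_n = k + 1, which vanishes since that polynomial has degree 4k. *)

From mathcomp Require Import all_boot all_order all_algebra.
From mathcomp Require Import cyclic separable cyclotomic.
From mathcomp Require Import zify ring.
Import Order.TTheory GRing.Theory Num.Theory.
Local Open Scope ring_scope.

(* The matrix [[2, 2], [4, 0]] of the recurrence has eigenvalues 4 and -2. *)
Lemma recurrence_closed_form (R : numFieldType) (a b : nat -> R) :
  (forall n, a n.+1 = 2 * (a n + b n)) -> (forall n, b n.+1 = 4 * a n) ->
  forall n, a n = 4 ^+ n * ((2 * a 0 + b 0) / 3 + (- 2^-1) ^+ n * ((a 0 - b 0) / 3)).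
Proof.
move=> ha hb n.
suff [] : a n = 4 ^+ n * ((2 * a 0 + b 0) / 3 + (- 2^-1) ^+ n * ((a 0 - b 0) / 3))
  /\ b n = 4 ^+ n * ((2 * a 0 + b 0) / 3 - 2 * (- 2^-1) ^+ n * ((a 0 - b 0) / 3)) by [].
elim: n => [|n [IHa IHb]]; first by split; field.
by rewrite ha hb IHa IHb !exprS; split; field.
Qed.

Section Polynomials.
Context {C : numClosedFieldType}.
Implicit Types (p q f g : {poly C}) (s u x : C).

Lemma int_mul_conjE {p q n} : (size p <= n)%N -> (size q <= n)%N ->
  int_mul_conj p q = \sum_(j < n) p`_j * (q`_j)^*.
Proof.
move=> hp hq; have hpq : (maxn (size p) (size q) <= n)%N by rewrite geq_max hp hq.
rewrite /int_mul_conj -(subnKC hpq) big_split_ord /= [X in _ + X]big1 ?addr0 // => j _.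
by rewrite nth_default ?mul0r // (leq_trans (leq_maxl _ (size q))) ?leq_addr.
Qed.

Lemma int_mul_conjXn p n : int_mul_conj p 'X^n = p`_n.
Proof.
rewrite (@int_mul_conjE p _ (maxn (size p) n.+1)) ?leq_maxl ?size_polyXn ?leq_maxr //.
have hn : (n < maxn (size p) n.+1)%N by rewrite leq_max ltnSn orbT.
rewrite (bigD1 (Ordinal hn)) //= coefXn eqxx conjC_nat mulr1 big1 ?addr0 // => j hj.
rewrite coefXn; case: eqP => [jn | _]; last by rewrite conjC_nat mulr0.
by case/eqP: hj; apply: val_inj.
Qed.

Lemma norm2sq_eq0 f : (norm2sq f == 0) = (f == 0).
Proof.
apply/eqP/eqP => [|->]; last by rewrite /norm2sq /int_mul_conj size_poly0 big_ord0.
rewrite /norm2sq /int_mul_conj maxnn => /psumr_eq0P hf; apply/polyP => j.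
rewrite coef0; case: (ltnP j (size f)) => [hj | /(nth_default 0)//].
apply/eqP; rewrite -mul_conjC_eq0; apply/eqP.
by apply: (hf _ (Ordinal hj)) => // i _; apply: mul_conjC_ge0.
Qed.

Lemma leq_size_polyM {p q m n} : (size p <= m)%N -> (size q <= n)%N ->
  (size (p * q)%R <= (m + n).-1)%N.
Proof.
move=> hp hq; apply: (leq_trans (size_polyMleq _ _)).
by rewrite -!subn1 leq_sub2r // leq_add.
Qed.

Lemma size_ptilde p : size (ptilde p) = size p.
Proof. by rewrite size_comp_poly2 // size_polyN size_polyX. Qed.

Lemma horner_ptilde p x : (ptilde p).[x] = p.[-x].
Proof. by rewrite horner_comp hornerN hornerX. Qed.

Lemma size_pdagger p : p`_0 != 0 -> size (pdagger p) = size p.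
Proof. by move=> p0; rewrite size_poly_eq // subn1 subnn conjC_eq0. Qed.

Lemma size_step_leq s f : (size (step s f) <= size f + size f)%N.
Proof.
have hd : (size (pdagger f \Po - 'X) <= size f)%N.
  by rewrite size_comp_poly2 ?size_poly // size_polyN size_polyX.
rewrite /step /plen; apply: (leq_trans (size_polyD _ _)); rewrite geq_max leq_addr /=.
apply: (leq_trans (size_scale_leq _ _)).
apply: (leq_trans (leq_size_polyM (leqnn (size ('X^(size f) : {poly C}))) hd)).
by rewrite size_polyXn.
Qed.

Lemma coef0_size_gt0 {p} : p`_0 != 0 -> (0 < size p)%N.
Proof. by move=> p0; rewrite size_poly_gt0; apply: contraNneq p0 => ->; rewrite coef0. Qed.

Lemma size_step s f : s != 0 -> f`_0 != 0 -> size (step s f) = (size f + size f)%N.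
Proof.
move=> s0 f0; have f_gt0 := coef0_size_gt0 f0.
have hd : size (pdagger f \Po - 'X) = size f.
  by rewrite size_comp_poly2 ?size_pdagger // size_polyN size_polyX.
have hd0 : pdagger f \Po - 'X != 0 by rewrite -size_poly_gt0 hd.
rewrite /step /plen addrC size_polyDl size_scale // mulrC size_mulXn // hd //.
lia.
Qed.

Lemma coef0_step s f : (0 < size f)%N -> (step s f)`_0 = f`_0.
Proof. by move=> f_gt0; rewrite coefD coefZ coefXnM /plen f_gt0 mulr0 addr0. Qed.


Lemma norm1_neq0 {u} : `|u| = 1 -> u != 0.
Proof. by move=> hu; rewrite -normr_eq0 hu oner_eq0. Qed.

Lemma conjC_norm1 {u} : `|u| = 1 -> u^* = u^-1.
Proof. by move=> hu; rewrite invC_norm hu expr1n invr1 mul1r. Qed.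

Lemma horner_pdagger p x : `|x| = 1 ->
  (pdagger p).[x] = x ^+ (size p).-1 * (p.[x])^*.
Proof.
move=> hx; have ux : x \is a GRing.unit by rewrite unitfE norm1_neq0.
rewrite horner_poly horner_coef rmorph_sum mulr_sumr (reindex_inj rev_ord_inj) /=.
apply: eq_bigr => -[j hj] _ /=.
rewrite [in RHS]rmorphM [in RHS]rmorphXn /= (conjC_norm1 hx) exprVn.
move: hj; set m := size p => hj.
have -> : (m - 1 - (m - j.+1) = j)%N by lia.
have -> : (m - j.+1 = m.-1 - j)%N by lia.
rewrite exprB //; [exact: mulrCA | lia].
Qed.

Lemma horner_step s f x : `|x| = 1 ->
  (step s f).[x] = f.[x] + s * (x ^+ size f * (-x) ^+ (size f).-1) * (f.[-x])^*.
Proof.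
move=> hx; rewrite hornerD hornerZ hornerM hornerXn horner_comp hornerN hornerX.
by rewrite horner_pdagger ?normrN // !mulrA.
Qed.

(* C_prim_root_exists of cyclotomic.v, for an arbitrary numClosedFieldType. *)
Lemma prim_root_exists {n} : (0 < n)%N -> {z : C | n.-primitive_root z}.
Proof.
pose p : {poly C} := 'X^n - 1; have [r Dp] := closed_field_poly_normal p.
move=> n_gt0; apply/sigW; rewrite (monicP _) ?monicXnsubC // scale1r in Dp.
have rn1 : all n.-unity_root r by apply/allP=> z; rewrite -root_prod_XsubC -Dp.
have sz_r : (n < (size r).+1)%N by rewrite -(size_prod_XsubC r id) -Dp size_XnsubC.
have [|z] := hasP (has_prim_root n_gt0 rn1 _ sz_r); last by exists z.
by rewrite -separable_prod_XsubC -Dp separable_Xn_sub_1 // pnatr_eq0 -lt0n.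
Qed.

Lemma norm_unity_root {n} {z : C} : (0 < n)%N -> z ^+ n = 1 -> `|z| = 1.
Proof. by move=> n_gt0 zn; apply/eqP; rewrite -(pexpr_eq1 n_gt0) // -normrX zn normr1. Qed.

Lemma prim_root_half {n} {z : C} : (n + n).-primitive_root z -> z ^+ n = -1.
Proof.
move=> z_prim; have n_gt0 : (0 < n)%N.
  by have := prim_order_gt0 z_prim; rewrite addnn double_gt0.
have : (z ^+ n - 1) * (z ^+ n + 1) == 0.
  by rewrite -subr_sqr -exprM muln2 -addnn prim_expr_order // expr1n subrr.
have zn1 : z ^+ n != 1.
  by rewrite -(prim_order_dvd z_prim); apply/negP => /dvdn_leq; lia.
by rewrite mulf_eq0 subr_eq0 (negbTE zn1) addr_eq0 => /eqP.
Qed.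

Lemma sum_unity_root_expr n (z : C) : z ^+ n = 1 -> z != 1 -> \sum_(i < n) z ^+ i = 0.
Proof.
move=> zn z1; apply/eqP; move: (subrX1 z n).
by rewrite zn subrr => /esym/eqP; rewrite mulf_eq0 subr_eq0 (negbTE z1).
Qed.

Section Parseval.
Context {n : nat} {w : C} (w_prim : n.-primitive_root w).

Let w_norm1 : `|w| = 1 := norm_unity_root (prim_order_gt0 w_prim) (prim_expr_order w_prim).

Lemma sum_prim_root_expr_conj (j k : 'I_n) :
  \sum_(i < n) (w ^+ j * (w ^+ k)^*) ^+ i = if j == k then n%:R else 0.
Proof.
have wk : (w ^+ k)^* = (w ^+ k)^-1 by rewrite conjC_norm1 // normrX w_norm1 expr1n.
have wk0 : w ^+ k != 0 by rewrite expf_neq0 // norm1_neq0.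
rewrite wk; case: eqP => [-> | jk].
  by rewrite divff // (eq_bigr (fun=> 1)) => [|i _]; rewrite ?expr1n // sumr_const card_ord.
apply: sum_unity_root_expr.
  by rewrite expr_div_n -!exprM !(mulnC _ n) !exprM (prim_expr_order w_prim) !expr1n divr1.
apply/eqP => wjk; apply/jk/val_inj/eqP.
rewrite /= -(modn_small (ltn_ord j)) -(modn_small (ltn_ord k)) -(eq_prim_root_expr w_prim).
by rewrite -[w ^+ j](divfK wk0) wjk mul1r.
Qed.

Lemma int_mul_conj_prim_roots p q : (size p <= n)%N -> (size q <= n)%N ->
  n%:R * int_mul_conj p q = \sum_(i < n) p.[w ^+ i] * (q.[w ^+ i])^*.
Proof.
move=> hp hq; rewrite (int_mul_conjE hp hq).
transitivity (\sum_(j < n) \sum_(k < n)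
    p`_j * (q`_k)^* * \sum_(i < n) (w ^+ j * (w ^+ k)^*) ^+ i).
  rewrite mulr_sumr; apply: eq_bigr => j _.
  rewrite (bigD1 j) //= sum_prim_root_expr_conj eqxx big1 ?addr0 => [|k kj].
    exact: mulrC.
  by rewrite sum_prim_root_expr_conj eq_sym (negbTE kj) mulr0.
under eq_bigr do under eq_bigr do rewrite mulr_sumr.
under eq_bigr do rewrite exchange_big /=.
rewrite exchange_big /=; apply: eq_bigr => i _.
rewrite (horner_coef_wide _ hp) (horner_coef_wide _ hq) rmorph_sum mulr_suml.
apply: eq_bigr => j _; rewrite mulr_sumr; apply: eq_bigr => k _.
by rewrite rmorphM !rmorphXn exprMn -!exprM (mulnC j i) (mulnC k i) !exprM; ring.
Qed.

End Parseval.

(* The contribution of the two points x and -x to the discretized [int p * conj q]. *)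
Definition mul_conj_pm p q x := p.[x] * (q.[x])^* + p.[-x] * (q.[-x])^*.

Lemma int_mul_conj_prim_root_pairs {K : nat} {w : C} : (K + K).-primitive_root w ->
  forall p q, (size p <= K + K)%N -> (size q <= K + K)%N ->
  (K + K)%:R * int_mul_conj p q = \sum_(i < K) mul_conj_pm p q (w ^+ i).
Proof.
move=> w_prim p q hp hq.
rewrite (int_mul_conj_prim_roots w_prim) // big_split_ord big_split /=.
by congr (_ + _); apply: eq_bigr => i _; rewrite exprD (prim_root_half w_prim) mulN1r.
Qed.

Section StepOnUnitCircle.
Context {s x : C} {k : nat} (s_norm1 : `|s| = 1) (x_norm1 : `|x| = 1).

Let u := s * (x ^+ k.+1 * (-x) ^+ k).

Let u_norm1 : `|u| = 1.
Proof. by rewrite !normrM !normrX normrN x_norm1 s_norm1 !expr1n !mulr1. Qed.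

Let u_sqr : u ^+ 2 = s ^+ 2 * x ^+ (4 * k + 2).
Proof.
rewrite !exprMn -!exprM (mulnC k 2) (exprM (- x) 2 k) sqrrN -exprM -exprD.
by congr (_ * (_ ^+ _)); lia.
Qed.

Let horner_step_pm {f} : size f = k.+1 ->
  (step s f).[x] = f.[x] + u * (f.[-x])^* /\ (step s f).[-x] = f.[-x] - u * (f.[x])^*.
Proof.
move=> hf; rewrite !horner_step ?normrN // hf opprK; split => //.
by rewrite /u !exprS; ring.
Qed.

(* Only |u| = 1 matters, so u is made opaque before pushing conjugations inwards. *)
Local Ltac unitary_field :=
  clearbody u; rewrite ?(rmorphD, rmorphB, rmorphN, rmorphM, fmorphV, rmorphXn) /= ?conjCK
    ?(conjC_norm1 u_norm1) ?(conjC_norm1 s_norm1);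
  field; by rewrite ?(norm1_neq0 u_norm1) ?(norm1_neq0 s_norm1).

Local Notation cross f g :=
  ((s ^+ 2)^* * mul_conj_pm (f * g * ptilde f * ptilde g) 'X^(4 * k + 2) x).

Lemma mul_conj_pm_step f : size f = k.+1 ->
  mul_conj_pm (step s f) (step s f) x = 2 * mul_conj_pm f f x.
Proof.
move=> hf; rewrite /mul_conj_pm; have [-> ->] := horner_step_pm hf.
move: (f.[x]) (f.[-x]) => a c; unitary_field.
Qed.

Let cross_eq f g : cross f g = (f.[x] * g.[x] * f.[-x] * g.[-x]) * (u ^+ 2)^* *+ 2.
Proof.
have e : (4 * k + 2 = 2 * (2 * k + 1))%N by lia.
rewrite /mul_conj_pm !hornerM !horner_ptilde !hornerXn opprK e (exprM (- x) 2) sqrrN -exprM -e.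
rewrite u_sqr !rmorphM; ring.
Qed.

Lemma mul_conj_pm_step_mul f g : size f = k.+1 -> size g = k.+1 ->
  mul_conj_pm (step s f * step s g) (step s f * step s g) x =
    2 * (mul_conj_pm (f * g) (f * g) x + mul_conj_pm (f * ptilde g) (f * ptilde g) x)
    + (mul_conj_pm (f * ptilde f) (g * ptilde g) x
       + (mul_conj_pm (f * ptilde f) (g * ptilde g) x)^*)
    + (cross f g + (cross f g)^*).
Proof.
move=> hf hg; rewrite cross_eq /mul_conj_pm !hornerM !horner_ptilde !opprK.
have [-> ->] := horner_step_pm hf; have [-> ->] := horner_step_pm hg.
move: (f.[x]) (f.[-x]) (g.[x]) (g.[-x]) => a c b d; unitary_field.
Qed.

Lemma mul_conj_pm_step_mul_tilde f g : size f = k.+1 -> size g = k.+1 ->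
  2 * mul_conj_pm (step s f * ptilde (step s g)) (step s f * ptilde (step s g)) x
    + (mul_conj_pm (step s f * ptilde (step s f)) (step s g * ptilde (step s g)) x
       + (mul_conj_pm (step s f * ptilde (step s f)) (step s g * ptilde (step s g)) x)^*)
  = 8 * mul_conj_pm (f * g) (f * g) x - 4 * (cross f g + (cross f g)^*).
Proof.
move=> hf hg; rewrite cross_eq /mul_conj_pm !hornerM !horner_ptilde !opprK.
have [-> ->] := horner_step_pm hf; have [-> ->] := horner_step_pm hg.
move: (f.[x]) (f.[-x]) (g.[x]) (g.[-x]) => a c b d; unitary_field.
Qed.

End StepOnUnitCircle.

Section StepNorms.
Context {s : C} {k : nat} {f g : {poly C}}.
Hypotheses (s_norm1 : `|s| = 1) (hf : size f = k.+1) (hg : size g = k.+1).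

Let K := (k.+1 + k.+1)%N.

Let M_gt0 : (0 < K + K)%N. Proof. by []. Qed.

Let M_neq0 : (K + K)%:R != 0 :> C. Proof. by rewrite pnatr_eq0 -lt0n. Qed.

Let w : C := projT1 (prim_root_exists M_gt0).

Let w_prim : (K + K).-primitive_root w := projT2 (prim_root_exists M_gt0).

Let parseval := int_mul_conj_prim_root_pairs w_prim.

Let w_expr_norm1 i : `|w ^+ i| = 1.
Proof. by rewrite normrX (norm_unity_root M_gt0 (prim_expr_order w_prim)) expr1n. Qed.

Let size_leK p : (size p <= k.+1)%N -> (size p <= K)%N.
Proof. by move=> hp; rewrite (leq_trans hp) ?leq_addr. Qed.

Let size_leM p : (size p <= K)%N -> (size p <= K + K)%N.
Proof. by move=> hp; rewrite (leq_trans hp) ?leq_addr. Qed.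

Let size_mul_leM p q : (size p <= K)%N -> (size q <= K)%N -> (size (p * q)%R <= K + K)%N.
Proof. by move=> hp hq; rewrite (leq_trans (leq_size_polyM hp hq)) ?leq_pred. Qed.

Let size_f : (size f <= k.+1)%N. Proof. by rewrite hf. Qed.
Let size_g : (size g <= k.+1)%N. Proof. by rewrite hg. Qed.
Let size_ft : (size (ptilde f) <= k.+1)%N. Proof. by rewrite size_ptilde hf. Qed.
Let size_gt : (size (ptilde g) <= k.+1)%N. Proof. by rewrite size_ptilde hg. Qed.
Let size_F : (size (step s f) <= K)%N. Proof. by rewrite /K -hf size_step_leq. Qed.
Let size_G : (size (step s g) <= K)%N. Proof. by rewrite /K -hg size_step_leq. Qed.
Let size_Ft : (size (ptilde (step s f)) <= K)%N. Proof. by rewrite size_ptilde. Qed.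
Let size_Gt : (size (ptilde (step s g)) <= K)%N. Proof. by rewrite size_ptilde. Qed.

Local Ltac size_bounds :=
  rewrite ?size_mul_leM ?size_leM ?size_F ?size_G ?size_Ft ?size_Gt ?size_leK //.

Let cross_sum_eq0 :
  \sum_(i < K) mul_conj_pm (f * g * ptilde f * ptilde g) 'X^(4 * k + 2) (w ^+ i) = 0.
Proof.
have hP : (size (f * g * ptilde f * ptilde g)%R <= 4 * k + 1)%N.
  have := leq_size_polyM (leq_size_polyM (leq_size_polyM size_f size_g) size_ft) size_gt.
  by move/leq_trans; apply; lia.
apply: (mulfI M_neq0); rewrite mulr0 -parseval.
- by rewrite int_mul_conjXn nth_default ?mulr0 //; apply: (leq_trans hP); lia.
- by apply: (leq_trans hP); rewrite /K; lia.
- by rewrite size_polyXn /K; lia.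
Qed.

Lemma norm2sq_step : norm2sq (step s f) = 2 * norm2sq f.
Proof.
apply: (mulfI M_neq0); rewrite mulrCA /norm2sq !parseval; size_bounds.
rewrite mulr_sumr; apply: eq_bigr => i _.
exact: (mul_conj_pm_step s_norm1 (w_expr_norm1 i) _ hf).
Qed.

Lemma norm2sq_step_mul :
  norm2sq (step s f * step s g) = 2 * (norm2sq (f * g)
    + (norm2sq (f * ptilde g) + 'Re (int_mul_conj (f * ptilde f) (g * ptilde g)))).
Proof.
apply: (mulfI M_neq0); set D := int_mul_conj (f * ptilde f) (g * ptilde g).
have -> : (K + K)%:R * (2 * (norm2sq (f * g) + (norm2sq (f * ptilde g) + 'Re D))) =
    2 * ((K + K)%:R * norm2sq (f * g) + (K + K)%:R * norm2sq (f * ptilde g))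
    + ((K + K)%:R * D + ((K + K)%:R * D)^*).
  by rewrite ReE rmorphM /= conjC_nat; field.
rewrite /D /norm2sq !parseval; size_bounds.
under eq_bigr do rewrite (mul_conj_pm_step_mul s_norm1 (w_expr_norm1 _) _ _ hf hg).
have sum_lin (a b d c : 'I_K -> C) :
    \sum_i (2 * (a i + b i) + (d i + (d i)^*) + (c i + (c i)^*)) =
    2 * (\sum_i a i + \sum_i b i) + (\sum_i d i + (\sum_i d i)^*)
    + (\sum_i c i + (\sum_i c i)^*).
  by rewrite !big_split /= -mulr_sumr big_split -!rmorph_sum.
by rewrite sum_lin -mulr_sumr cross_sum_eq0 mulr0 rmorph0 !addr0.
Qed.

Lemma norm2sq_step_mul_tilde :
  norm2sq (step s f * ptilde (step s g))
    + 'Re (int_mul_conj (step s f * ptilde (step s f)) (step s g * ptilde (step s g)))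
  = 4 * norm2sq (f * g).
Proof.
set D := int_mul_conj (step s f * ptilde (step s f)) (step s g * ptilde (step s g)).
have sum_lin (b d a c : 'I_K -> C) :
    (forall i, 2 * b i + (d i + (d i)^*) = 8 * a i - 4 * (c i + (c i)^*)) ->
    \sum_i c i = 0 ->
    2 * \sum_i b i + (\sum_i d i + (\sum_i d i)^*) = 8 * \sum_i a i.
  move=> hi c0; rewrite mulr_sumr rmorph_sum -!big_split (eq_bigr _ (fun i _ => hi i)).
  by rewrite sumrB -!mulr_sumr big_split /= -rmorph_sum c0 rmorph0 addr0 mulr0 subr0.
have h : 2 * ((K + K)%:R * norm2sq (step s f * ptilde (step s g)))
    + ((K + K)%:R * D + ((K + K)%:R * D)^*) = 8 * ((K + K)%:R * norm2sq (f * g)).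
  rewrite /D /norm2sq !parseval; size_bounds.
  apply: sum_lin => [i|].
    exact: (mul_conj_pm_step_mul_tilde s_norm1 (w_expr_norm1 _) _ _ hf hg).
  by rewrite -mulr_sumr cross_sum_eq0 mulr0.
apply: (mulfI M_neq0); move: h; rewrite ReE rmorphM /= conjC_nat.
move: (norm2sq _) (norm2sq _) D => A B D' h.
rewrite [LHS](_ : _ = (2 * ((K + K)%:R * B) + ((K + K)%:R * D' + (K + K)%:R * D'^*)) / 2).
  by rewrite h; field.
by field.
Qed.

End StepNorms.

Section Iteration.
Context {sigma : nat -> C}.
Hypothesis sigma_norm1 : forall n, `|sigma n| = 1.

Lemma coef0_iter_seq f n : f`_0 != 0 -> (iter_seq sigma f n)`_0 = f`_0.
Proof.
move=> f0; elim: n => //= n IHn.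
by rewrite coef0_step // coef0_size_gt0 // IHn.
Qed.

Lemma size_iter_seq f n : f`_0 != 0 -> size (iter_seq sigma f n) = (2 ^ n * size f)%N.
Proof.
move=> f0; elim: n => [|n IHn] /=; first by rewrite mul1n.
rewrite size_step ?coef0_iter_seq ?(norm1_neq0 (sigma_norm1 n)) //.
by rewrite expnS -mulnA mul2n -addnn -IHn.
Qed.

Lemma iter_seq_size_succ {f} n : f`_0 != 0 ->
  size (iter_seq sigma f n) = (2 ^ n * size f).-1.+1.
Proof. by move=> f0; rewrite -size_iter_seq // prednK // coef0_size_gt0 ?coef0_iter_seq. Qed.

Lemma norm2sq_iter_seq f n : f`_0 != 0 ->
  norm2sq (iter_seq sigma f n) = 2 ^+ n * norm2sq f.
Proof.
move=> f0; elim: n => [|n IHn] /=; first by rewrite mul1r.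
by rewrite (norm2sq_step (sigma_norm1 n) (iter_seq_size_succ n f0)) IHn exprS mulrA.
Qed.

Section Pair.
Context {f0 g0 : {poly C}}.
Hypotheses (size_fg0 : size f0 = size g0) (f00 : f0`_0 != 0) (g00 : g0`_0 != 0).

Lemma norm2sq_iter_seq_mul n :
  norm2sq (iter_seq sigma f0 n * iter_seq sigma g0 n) = 4 ^+ n *
    ((2 * norm2sq (f0 * g0) + (norm2sq (f0 * ptilde g0)
        + 'Re (int_mul_conj (f0 * ptilde f0) (g0 * ptilde g0)))) / 3
     + (- 2^-1) ^+ n * ((norm2sq (f0 * g0) - (norm2sq (f0 * ptilde g0)
        + 'Re (int_mul_conj (f0 * ptilde f0) (g0 * ptilde g0)))) / 3)).
Proof.
pose f m := iter_seq sigma f0 m; pose g m := iter_seq sigma g0 m.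
have size_f m : size (f m) = (2 ^ m * size f0).-1.+1 by apply: iter_seq_size_succ.
have size_g m : size (g m) = (2 ^ m * size f0).-1.+1.
  by rewrite size_fg0; apply: iter_seq_size_succ.
apply: (@recurrence_closed_form C (fun m => norm2sq (f m * g m))
  (fun m => norm2sq (f m * ptilde (g m))
     + 'Re (int_mul_conj (f m * ptilde (f m)) (g m * ptilde (g m))))) => m.
- exact: (norm2sq_step_mul (sigma_norm1 m) (size_f m) (size_g m)).
- exact: (norm2sq_step_mul_tilde (sigma_norm1 m) (size_f m) (size_g m)).
Qed.

End Pair.

End Iteration.

End Polynomials.

Theorem theorem2p4 (C : numClosedFieldType) (f0 g0 : {poly C})
    (sigma : nat -> C) :
  plen f0 = plen g0 ->
  f0`_0 != 0 -> g0`_0 != 0 ->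
  (forall n, sigma n = 1 \/ sigma n = -1) ->
  forall n : nat,
    let fn := iter_seq sigma f0 n in
    let gn := iter_seq sigma g0 n in
    let A := norm2sq (f0 * g0) in
    let B := norm2sq (f0 * ptilde g0) in
    let D := 'Re (int_mul_conj (f0 * ptilde f0) (g0 * ptilde g0)) in
    let N := norm2sq f0 * norm2sq g0 in
    norm2sq (fn * gn) / (norm2sq fn * norm2sq gn)
    = (2%:R * A + B + D) / (3%:R * N)
      + (- (2%:R)^-1) ^+ n * ((A - B - D) / (3%:R * N)).
Proof.
move=> size_fg f00 g00 sigma_pm1 n fn gn A B D N.
have sigma_norm1 m : `|sigma m| = 1 by case: (sigma_pm1 m) => ->; rewrite ?normrN normr1.
have nf : norm2sq f0 != 0 by rewrite norm2sq_eq0 -size_poly_gt0 coef0_size_gt0.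
have ng : norm2sq g0 != 0 by rewrite norm2sq_eq0 -size_poly_gt0 coef0_size_gt0.
have two_n : (2 : C) ^+ n != 0 by rewrite expf_neq0 // pnatr_eq0.
rewrite /fn /gn (norm2sq_iter_seq_mul sigma_norm1 size_fg f00 g00).
rewrite !(norm2sq_iter_seq sigma_norm1) // (_ : 4 ^+ n = 2 ^+ n * 2 ^+ n).
  by rewrite /A /B /D /N; field; rewrite nf ng two_n.
by rewrite -exprMn -natrM.
Qed.
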